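(* Let $K>0$, let $H_1,H_2$ be real Hilbert spaces, let $B=H_1\times H_2$ with the symmetric bilinear form $\lfloor (x_1,x_2),(y_1,y_2)\rfloor=K^2\langle x_1,y_1\rangle_{H_1}-\langle x_2,y_2\rangle_{H_2}$ and $q(b)=\frac12\lfloor b,b\rfloor$. Let $0<K'<K$ and let $f:D\to H_2$ be a $K'$-Lipschitz mapping defined on a nonempty closed set $D\subset H_1$. Then the graph of $f$ is $q$-representable.
   Context: $w(B,B)$ is the coarsest topology on $B$ making all maps $b\mapsto\lfloor b,c\rfloor$ ($c\in B$) continuous (here it coincides with the weak topology of the Hilbert space $H_1\times H_2$). A nonempty $A\subset B$ is $q$-positive if $q(b-c)\ge0$ for all $b,c\in A$. A $q$-positive set $A$ is $q$-representable if there exists a $w(B,B)$-lower semicontinuous proper convex function $\varphi:B\to\mathbb{R}\cup\{+\infty\}$ with $\varphi\ge q$ on $B$ and $\{b:\varphi(b)=q(b)\}=A$. A map $g$ is $L$-Lipschitz if $\|g(x)-g(y)\|_{H_2}\le L\|x-y\|_{H_1}$ on its domain. *)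

From HB Require Import structures.
From mathcomp Require Import all_boot all_order all_algebra.
From mathcomp Require Import all_classical all_reals ereal.
Set Implicit Arguments. Unset Strict Implicit. Unset Printing Implicit Defensive.
Import Order.TTheory GRing.Theory Num.Theory.
Local Open Scope ring_scope.
Local Open Scope classical_set_scope.

Definition ipnorm (R : realType) (V : lmodType R) (ip : V -> V -> R) (x : V) : R :=
  Num.sqrt (ip x x).

Definition is_hilbert (R : realType) (V : lmodType R) (ip : V -> V -> R) : Prop :=
  [/\ (forall x y, ip x y = ip y x),
      (forall (a : R) x y z, ip (a *: x + y) z = a * ip x z + ip y z),
      (forall x, 0 <= ip x x),
      (forall x, ip x x = 0 -> x = 0) &
      (forall u : nat -> V,
         (forall e : R, 0 < e -> exists N : nat, forall m n : nat,
             (N <= m)%N -> (N <= n)%N -> ipnorm ip (u m - u n) < e) ->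
         exists l : V, forall e : R, 0 < e -> exists N : nat, forall n : nat,
             (N <= n)%N -> ipnorm ip (u n - l) < e)].

Definition hclosed (R : realType) (V : lmodType R) (ip : V -> V -> R) (D : set V) : Prop :=
  forall x, ~ D x -> exists r : R, 0 < r /\ forall y, ipnorm ip (y - x) < r -> ~ D y.

Definition lipschitz_on (R : realType) (V1 V2 : lmodType R)
  (ip1 : V1 -> V1 -> R) (ip2 : V2 -> V2 -> R) (L : R) (D : set V1) (f : V1 -> V2) : Prop :=
  forall x y, D x -> D y -> ipnorm ip2 (f x - f y) <= L * ipnorm ip1 (x - y).

Section B.
Variables (R : realType) (V1 V2 : lmodType R)
  (ip1 : V1 -> V1 -> R) (ip2 : V2 -> V2 -> R) (K : R).

Definition bform (b c : V1 * V2) : R := K ^+ 2 * ip1 b.1 c.1 - ip2 b.2 c.2.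
Definition qform (b : V1 * V2) : R := bform b b / 2.
Definition bsub (b c : V1 * V2) : V1 * V2 := (b.1 - c.1, b.2 - c.2).
Definition bcomb (t : R) (b c : V1 * V2) : V1 * V2 :=
  (t *: b.1 + (1 - t) *: c.1, t *: b.2 + (1 - t) *: c.2).

(* closed for w(B,B): the coarsest topology making every b |-> bform b c continuous *)
Definition wclosed (S : set (V1 * V2)) : Prop :=
  forall b, ~ S b -> exists (cs : seq (V1 * V2)) (e : R), 0 < e /\
    forall b', (forall c, c \in cs -> `|bform (bsub b' b) c| < e) -> ~ S b'.

Definition wlsc (phi : V1 * V2 -> \bar R) : Prop :=
  forall t : R, wclosed [set b | (phi b <= t%:E)%E].

Definition proper_fun (phi : V1 * V2 -> \bar R) : Prop :=
  (forall b, phi b != -oo%E) /\ (exists b, phi b != +oo%E).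

Definition convex_fun (phi : V1 * V2 -> \bar R) : Prop :=
  forall (t : R) b c, 0 < t < 1 ->
    (phi (bcomb t b c) <= t%:E * phi b + (1 - t)%:E * phi c)%E.

Definition q_positive (A : set (V1 * V2)) : Prop :=
  A !=set0 /\ forall b c, A b -> A c -> 0 <= qform (bsub b c).

Definition q_representable (A : set (V1 * V2)) : Prop :=
  q_positive A /\
  exists phi : V1 * V2 -> \bar R,
    [/\ wlsc phi, proper_fun phi, convex_fun phi,
        (forall b, ((qform b)%:E <= phi b)%E) &
        [set b | phi b = (qform b)%:E] = A].
End B.

Definition fgraph_on (R : realType) (V1 V2 : lmodType R) (D : set V1) (f : V1 -> V2)
  : set (V1 * V2) := [set b | D b.1 /\ b.2 = f b.1].

From mathcomp Require Import all_boot all_order all_algebra.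
From mathcomp Require Import all_classical all_reals ereal.
From mathcomp Require Import ring lra.
Import Order.TTheory GRing.Theory Num.Theory.
Set Implicit Arguments.
Unset Strict Implicit.
Unset Printing Implicit Defensive.
Local Open Scope ring_scope.
Local Open Scope classical_set_scope.

(* q-representability of a q-positive set A follows once every b outside A
   is separated from A by an affine minorant b |-> [b, e] - q(e) + gam/2 of q
   that stays below q on A (i.e. q(a - e) >= gam/2 there) but exceeds q(b):
   the supremum of these minorants is then convex, w(B,B)-lsc, >= q, and equal
   to q exactly on A.  For the graph of f, a point b over D is separated by the
   centre (b.1, f(b.1)).  A point b with b.1 = x outside the closed set D needs
   a value y with |f a - y|^2 + d <= K^2 |a - x|^2 on D for some d > 0, an
   approximate Kirszbraun extension: if inf_y sup_a (|f a - y|^2 - l |a - x|^2)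
   were positive, the nearly active points a would have a convex combination
   p of their images, nearly closest to y, with <f a - y, p - y> bounded below,
   and moving y towards p would lower the supremum. *)

Section InnerProduct.
Variables (R : realType) (V : lmodType R) (ip : V -> V -> R).
Hypothesis ipC : forall x y, ip x y = ip y x.
Hypothesis ipL : forall (a : R) x y z, ip (a *: x + y) z = a * ip x z + ip y z.
Hypothesis ipP : forall x, 0 <= ip x x.

Lemma ip0l z : ip 0 z = 0.
Proof.
have h := ipL 1 0 0 z; rewrite scale1r addr0 mul1r in h.
by apply: (addrI (ip 0 z)); rewrite -h addr0.
Qed.

Lemma ipDl x y z : ip (x + y) z = ip x z + ip y z.
Proof. by rewrite -[x]scale1r ipL mul1r scale1r. Qed.

Lemma ipZl a x z : ip (a *: x) z = a * ip x z.
Proof. by rewrite -[a *: x]addr0 ipL ip0l addr0. Qed.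

Lemma ipNl x z : ip (- x) z = - ip x z.
Proof. by rewrite -scaleN1r ipZl mulN1r. Qed.

Lemma ipBl x y z : ip (x - y) z = ip x z - ip y z.
Proof. by rewrite ipDl ipNl. Qed.

Lemma ipDr x y z : ip z (x + y) = ip z x + ip z y.
Proof. by rewrite ipC ipDl !(ipC z). Qed.

Lemma ipZr a x z : ip z (a *: x) = a * ip z x.
Proof. by rewrite ipC ipZl ipC. Qed.

Lemma ipBr x y z : ip z (x - y) = ip z x - ip z y.
Proof. by rewrite !(ipC z) ipBl. Qed.

Lemma ip_selfD u v : ip (u + v) (u + v) = ip u u + 2 * ip u v + ip v v.
Proof. by rewrite ipDl !ipDr (ipC v u); ring. Qed.

Lemma ip_selfB u v : ip (u - v) (u - v) = ip u u - 2 * ip u v + ip v v.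
Proof. by rewrite ipBl !ipBr (ipC v u); ring. Qed.

Lemma ip_selfZ a u : ip (a *: u) (a *: u) = a ^+ 2 * ip u u.
Proof. by rewrite ipZl ipZr; ring. Qed.

Lemma ip_selfN u : ip (- u) (- u) = ip u u.
Proof. by rewrite ipNl ipC ipNl opprK. Qed.

Lemma ip_selfBC u v : ip (u - v) (u - v) = ip (v - u) (v - u).
Proof. by rewrite -opprB ip_selfN. Qed.

Lemma ip_selfD_le u v (t : R) : 0 < t ->
  ip (u + v) (u + v) <= (1 + t) * ip u u + (1 + t^-1) * ip v v.
Proof.
move=> t0; have := ipP (t *: u - v); rewrite ip_selfB ip_selfZ ipZl => h.
rewrite ip_selfD -subr_ge0.
have -> : (1 + t) * ip u u + (1 + t^-1) * ip v v - (ip u u + 2 * ip u v + ip v v)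
  = t^-1 * (t ^+ 2 * ip u u - 2 * (t * ip u v) + ip v v) by field; rewrite gt_eqF.
by apply: mulr_ge0 => //; rewrite invr_ge0 ltW.
Qed.

Lemma ip_selfD_le2 u v : ip (u + v) (u + v) <= 2 * ip u u + 2 * ip v v.
Proof. by have := ip_selfD_le u v ltr01; rewrite invr1. Qed.

Lemma ip_suml (T : Type) (s : seq T) (F : T -> V) z :
  ip (\sum_(t <- s) F t) z = \sum_(t <- s) ip (F t) z.
Proof. by elim: s => [|t s IH]; rewrite ?big_nil ?ip0l // !big_cons ipDl IH. Qed.

Lemma variance_decomp (T : Type) (s : seq (R * T)) (F : T -> V) z :
  \sum_(w <- s) w.1 = 1 ->
  let c := \sum_(w <- s) w.1 *: F w.2 in
  \sum_(w <- s) w.1 * ip (F w.2 - z) (F w.2 - z) =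
  \sum_(w <- s) w.1 * ip (F w.2 - c) (F w.2 - c) + ip (c - z) (c - z).
Proof.
move=> s1 c.
have split_term (w : R * T) : w.1 * ip (F w.2 - z) (F w.2 - z) =
    w.1 * ip (F w.2 - c) (F w.2 - c) + 2 * ip (w.1 *: (F w.2 - c)) (c - z)
    + w.1 * ip (c - z) (c - z).
  have -> : F w.2 - z = (F w.2 - c) + (c - z) by rewrite addrA subrK.
  by rewrite ip_selfD ipZl; ring.
rewrite (eq_bigr _ (fun w _ => split_term w)) !big_split /=.
rewrite -big_distrr -ip_suml -big_distrl /= s1 mul1r.
have -> : \sum_(w <- s) w.1 *: (F w.2 - c) = 0.
  under eq_bigr do rewrite scalerBr.
  by rewrite sumrB -scaler_suml s1 scale1r subrr.
by rewrite ip0l mulr0 addr0.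
Qed.

Lemma variance_pairs (T : Type) (s : seq (R * T)) (F : T -> V) :
  \sum_(w <- s) w.1 = 1 ->
  let c := \sum_(w <- s) w.1 *: F w.2 in
  \sum_(w <- s) \sum_(v <- s) w.1 * v.1 * ip (F w.2 - F v.2) (F w.2 - F v.2) =
  2 * \sum_(w <- s) w.1 * ip (F w.2 - c) (F w.2 - c).
Proof.
move=> s1 c.
have inner (w : R * T) :
    \sum_(v <- s) w.1 * v.1 * ip (F w.2 - F v.2) (F w.2 - F v.2) =
    w.1 * (\sum_(v <- s) v.1 * ip (F v.2 - c) (F v.2 - c))
    + w.1 * ip (F w.2 - c) (F w.2 - c).
  rewrite -mulrDr ip_selfBC -(variance_decomp F (F w.2) s1) big_distrr /=.
  by apply: eq_bigr => v _; rewrite ip_selfBC mulrA.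
rewrite (eq_bigr _ (fun w _ => inner w)) big_split /= -big_distrl /= s1 mul1r.
by ring.
Qed.

Lemma ip_near_min (u v : V) (lam tau : R) : 0 < lam ->
  ip u u < ip (u + lam *: v) (u + lam *: v) + lam * tau ->
  - tau < 2 * ip u v + lam * ip v v.
Proof.
move=> lam0; rewrite ip_selfD ipZr ip_selfZ -subr_gt0 => h.
rewrite -subr_gt0 -(pmulr_rgt0 _ lam0); move: h.
by congr (0 < _); ring.
Qed.

End InnerProduct.

Section OnePointExtension.
Variables (R : realType) (V1 V2 : lmodType R).
Variables (ip1 : V1 -> V1 -> R) (ip2 : V2 -> V2 -> R).
Hypothesis ip1C : forall x y, ip1 x y = ip1 y x.
Hypothesis ip1L : forall (a : R) x y z, ip1 (a *: x + y) z = a * ip1 x z + ip1 y z.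
Hypothesis ip1P : forall x, 0 <= ip1 x x.
Hypothesis ip2C : forall x y, ip2 x y = ip2 y x.
Hypothesis ip2L : forall (a : R) x y z, ip2 (a *: x + y) z = a * ip2 x z + ip2 y z.
Hypothesis ip2P : forall x, 0 <= ip2 x x.

Local Notation N1 u := (ip1 u u).
Local Notation N2 u := (ip2 u u).

Variables (D : set V1) (f : V1 -> V2) (k l : R) (x p0 : V1).
Hypothesis k_ge0 : 0 <= k.
Hypothesis lt_kl : k < l.
Hypothesis f_lip : forall a b, D a -> D b -> N2 (f a - f b) <= k * N1 (a - b).
Hypothesis Dp0 : D p0.

(* How far the extension of f by x |-> y is from being sqrt l-Lipschitz at a. *)
Definition defect a y := N2 (f a - y) - l * N1 (a - x).

Lemma l_gt0 : 0 < l. Proof. exact: le_lt_trans lt_kl. Qed.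

Lemma defect_coercive : exists c c', [/\ 0 < c, 0 <= c' &
  forall a y, D a -> defect a y + c * N1 (a - x) <= c' * (1 + N2 (f p0 - y))].
Proof.
have l0 := l_gt0; have kl := lt_kl; have k0 := k_ge0.
pose t := (l - k) / (6 * l).
have t0 : 0 < t by apply: divr_gt0; lra.
have t1 : t <= 1 by rewrite ler_pdivrMr; lra.
have tk : 3 * t * k < l - k.
  have -> : 3 * t * k = (l - k) * (k / (2 * l)) by rewrite /t; field; rewrite gt_eqF.
  by rewrite -[X in _ < X]mulr1 ltr_pM2l ?ltr_pdivrMr; lra.
have ti0 : 0 <= t^-1 by rewrite invr_ge0 ltW.
have c1k : (1 + t) ^+ 2 * k <= (1 + 3 * t) * k by apply: ler_wpM2r => //; nra.
pose c2 := (1 + t) * (1 + t^-1) * k; pose c3 := 1 + t^-1.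
have c20 : 0 <= c2 by apply: mulr_ge0 => //; apply: mulr_ge0; lra.
have c30 : 0 <= c3 by rewrite /c3; lra.
exists (l - (1 + t) ^+ 2 * k), (c2 * N1 (x - p0) + c3); split.
- lra.
- exact: addr_ge0 (mulr_ge0 c20 (ip1P _)) c30.
move=> a y Da; rewrite /defect.
have hf : N2 (f a - y) <= (1 + t) * N2 (f a - f p0) + c3 * N2 (f p0 - y).
  have -> : f a - y = (f a - f p0) + (f p0 - y) by rewrite addrA subrK.
  exact: ip_selfD_le.
have ha : N1 (a - p0) <= (1 + t) * N1 (a - x) + (1 + t^-1) * N1 (x - p0).
  have -> : a - p0 = (a - x) + (x - p0) by rewrite addrA subrK.
  exact: ip_selfD_le.
have hfp0 : (1 + t) * N2 (f a - f p0) <= (1 + t) ^+ 2 * k * N1 (a - x) + c2 * N1 (x - p0).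
  have -> : (1 + t) ^+ 2 * k * N1 (a - x) + c2 * N1 (x - p0)
    = (1 + t) * (k * ((1 + t) * N1 (a - x) + (1 + t^-1) * N1 (x - p0))) by rewrite /c2; ring.
  apply: ler_wpM2l; first lra.
  exact: le_trans (f_lip Da Dp0) (ler_wpM2l k0 ha).
have hrhs : c2 * N1 (x - p0) + c3 * N2 (f p0 - y) <= (c2 * N1 (x - p0) + c3) * (1 + N2 (f p0 - y)).
  have := mulr_ge0 c20 (ip1P (x - p0)); have := ip2P (f p0 - y); move: c30; nra.
lra.
Qed.

Lemma defect_move a y p (s : R) : defect a (y + s *: (p - y)) =
  defect a y - 2 * s * ip2 (f a - y) (p - y) + s ^+ 2 * N2 (p - y).
Proof.
rewrite /defect opprD addrA (ip_selfB ip2C ip2L (f a - y)) (ipZr ip2C ip2L) (ip_selfZ ip2C ip2L).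
by ring.
Qed.

Lemma defect_conv a y p (s : R) : defect a (y + s *: (p - y)) =
  (1 - s) * defect a y + s * defect a p - s * (1 - s) * N2 (p - y).
Proof.
have -> : defect a p = defect a y - 2 * ip2 (f a - y) (p - y) + N2 (p - y).
  rewrite /defect; have -> : f a - p = (f a - y) - (p - y) by rewrite opprB addrA subrK.
  by rewrite (ip_selfB ip2C ip2L (f a - y)); ring.
by rewrite defect_move; ring.
Qed.

(* Finitely supported probability measures on P, as lists of (weight, point). *)
Definition cloud (P : set V1) (s : seq (R * V1)) :=
  [/\ forall w, w \in s -> 0 <= w.1, \sum_(w <- s) w.1 = 1 &
      forall w, w \in s -> P w.2].

Definition fmean (s : seq (R * V1)) := \sum_(w <- s) w.1 *: f w.2.

Definition cloud_cons (lam : R) a (s : seq (R * V1)) :=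
  (lam, a) :: [seq ((1 - lam) * w.1, w.2) | w <- s].

Lemma sub_cloud (P Q : set V1) s : P `<=` Q -> cloud P s -> cloud Q s.
Proof. by move=> PQ [w0 s1 sP]; split=> // w /sP /PQ. Qed.

Lemma cloud1 (P : set V1) a : P a -> cloud P [:: (1, a)].
Proof.
by move=> Pa; split=> [w||w]; rewrite ?big_seq1 // inE => /eqP ->.
Qed.

Lemma cloud_cons_cloud (P : set V1) (lam : R) a s :
  0 <= lam <= 1 -> P a -> cloud P s -> cloud P (cloud_cons lam a s).
Proof.
move=> /andP[lam0 lam1] Pa [w0 s1 sP]; split.
- move=> w; rewrite inE => /orP[/eqP -> // | /mapP[v vs ->]] /=.
  by apply: mulr_ge0; [lra | exact: w0].
- by rewrite big_cons big_map /= -mulr_sumr s1; ring.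
- by move=> w; rewrite inE => /orP[/eqP -> // | /mapP[v vs ->]]; exact: sP _ vs.
Qed.

Lemma fmean_cloud_cons (lam : R) a s :
  fmean (cloud_cons lam a s) = lam *: f a + (1 - lam) *: fmean s.
Proof.
rewrite /fmean big_cons big_map scaler_sumr; congr (_ + _).
by apply: eq_bigr => w _; rewrite scalerA.
Qed.

Lemma fmean_dist_le (P : set V1) s y : cloud P s ->
  N2 (fmean s - y) <= \sum_(w <- s) w.1 * N2 (f w.2 - y).
Proof.
case=> w0 s1 _; rewrite (variance_decomp ip2C ip2L f y s1) lerDr big_seq.
by apply: sumr_ge0 => w ws; exact: mulr_ge0 (w0 _ ws) (ip2P _).
Qed.

(* The variance of the images is at most k times the variance of the cloud,
   and k < l. *)
Lemma mean_defect_le s y : cloud D s ->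
  \sum_(w <- s) w.1 * defect w.2 y <= N2 (fmean s - y).
Proof.
case=> w0 s1 sD; have kl := lt_kl.
have Ef := variance_decomp ip2C ip2L f y s1.
have Ex := variance_decomp ip1C ip1L (fun v => v) x s1.
have Pf := variance_pairs ip2C ip2L f s1.
have Px := variance_pairs ip1C ip1L (fun v => v) s1.
rewrite /= -/(fmean s) in Ef Pf Ex Px.
set Q := \sum_(w <- s) w.1 *: w.2 in Ex Px.
have Hpairs : \sum_(w <- s) \sum_(v <- s) w.1 * v.1 * N2 (f w.2 - f v.2)
    <= k * \sum_(w <- s) \sum_(v <- s) w.1 * v.1 * N1 (w.2 - v.2).
  rewrite mulr_sumr !big_seq; apply: ler_sum => w ws.
  rewrite mulr_sumr !big_seq; apply: ler_sum => v vs.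
  rewrite mulrCA; apply: ler_wpM2l; first exact: mulr_ge0 (w0 _ ws) (w0 _ vs).
  exact: f_lip (sD _ ws) (sD _ vs).
have -> : \sum_(w <- s) w.1 * defect w.2 y =
    \sum_(w <- s) w.1 * N2 (f w.2 - y) - l * \sum_(w <- s) w.1 * N1 (w.2 - x).
  by rewrite mulr_sumr -sumrB; apply: eq_bigr => w _; rewrite /defect; ring.
have VQ : 0 <= \sum_(w <- s) w.1 * N1 (w.2 - Q).
  by rewrite big_seq; apply: sumr_ge0 => w ws; exact: mulr_ge0 (w0 _ ws) (ip1P _).
have kVQ := ler_wpM2r VQ (ltW kl).
have lQ := mulr_ge0 (ltW l_gt0) (ip1P (Q - x)).
rewrite Px in Hpairs; rewrite Ex; lra.
Qed.

Definition active y (h e : R) a := D a /\ h - e < defect a y.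

Lemma cloud_active_far y (h e : R) s : cloud (active y h e) s -> h - e <= N2 (fmean s - y).
Proof.
move=> cs; have cD : cloud D s by apply: sub_cloud cs => a [].
apply: le_trans (mean_defect_le y cD).
case: cs => w0 s1 sA; rewrite -[h - e]mul1r -s1 mulr_suml big_seq [X in _ <= X]big_seq.
apply: ler_sum => w ws; apply: ler_wpM2l; first exact: w0.
by have [_ /ltW] := sA _ ws.
Qed.

Lemma near_min_cloud_obtuse y (h eps R1 lam : R) s0 a :
  0 < lam -> lam <= 1 -> 8 * lam * R1 <= eps ->
  (forall a, active y h eps a -> N2 (f a - y) <= R1) ->
  cloud (active y h eps) s0 -> eps <= N2 (fmean s0 - y) <= R1 ->
  (forall s, cloud (active y h eps) s ->
     N2 (fmean s0 - y) < N2 (fmean s - y) + lam * (eps / 2)) ->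
  active y h eps a -> eps / 2 < ip2 (f a - y) (fmean s0 - y).
Proof.
move=> lam0 lam1 lamR actR cs0 /andP[pE pR] nearmin aa.
set p := fmean s0 in pE pR nearmin *.
have lam01 : 0 <= lam <= 1 by rewrite (ltW lam0) lam1.
have := nearmin _ (cloud_cons_cloud lam01 aa cs0); rewrite fmean_cloud_cons.
have -> : lam *: f a + (1 - lam) *: p - y = (p - y) + lam *: (f a - p).
  by rewrite scalerBl scale1r scalerBr (addrCA (lam *: f a)) (addrAC p).
move=> /(ip_near_min ip2C ip2L lam0) near.
have fap : N2 (f a - p) <= 4 * R1.
  have -> : f a - p = (f a - y) + (y - p) by rewrite addrA subrK.
  apply: le_trans (ip_selfD_le2 ip2C ip2L ip2P _ _) _.
  rewrite (ip_selfBC ip2C ip2L y p); have := actR a aa.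
  lra.
have := ler_wpM2l (ltW lam0) fap.
have -> : f a - y = (f a - p) + (p - y) by rewrite addrA subrK.
rewrite (ipDl ip2L (f a - p)) (ip2C (f a - p)); lra.
Qed.

Lemma obtuse_direction y (h eps R1 : R) :
  0 < eps -> 2 * eps <= h -> (exists a, active y h eps a) ->
  (forall a, active y h eps a -> N2 (f a - y) <= R1) ->
  exists p, N2 (p - y) <= R1 /\
    forall a, active y h eps a -> eps / 2 < ip2 (f a - y) (p - y).
Proof.
move=> eps0 heps [a0 act0] actR.
have R10 : 0 <= R1 := le_trans (ip2P _) (actR a0 act0).
pose E := [set r | exists2 s, cloud (active y h eps) s & r = N2 (fmean s - y)].
have far s : cloud (active y h eps) s -> eps <= N2 (fmean s - y).
  by move=> cs; have := cloud_active_far cs; lra.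
have Einf : has_inf E.
  split; first by exists (N2 (fmean [:: (1, a0)] - y)), [:: (1, a0)]; first exact: cloud1.
  by exists eps => _ [s cs ->]; exact: far.
pose lam := eps / (8 * R1 + eps).
have lam0 : 0 < lam by apply: divr_gt0; lra.
have lam1 : lam <= 1 by rewrite ler_pdivrMr; lra.
have lamR : 8 * lam * R1 <= eps.
  have : lam * (8 * R1 + eps) = eps by rewrite mulfVK // gt_eqF //; lra.
  by have := mulr_ge0 (ltW lam0) (ltW eps0); lra.
have tol : 0 < lam * (eps / 2) by apply: mulr_gt0; lra.
have [_ [s0 cs0 ->] near] := inf_adherent tol Einf.
have pR : N2 (fmean s0 - y) <= R1.
  apply: le_trans (fmean_dist_le y cs0) _; case: (cs0) => w0 s1 sA.
  rewrite -[R1]mul1r -s1 mulr_suml !big_seq; apply: ler_sum => w ws.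
  by apply: ler_wpM2l; [exact: w0 | exact/actR/sA].
exists (fmean s0); split=> // a.
apply: (near_min_cloud_obtuse (R1 := R1) (lam := lam)) => //.
- by rewrite far.
- move=> s cs; apply: lt_le_trans near _; rewrite lerD2r.
  by apply: ge_inf (proj2 Einf) _ _; exists s.
Qed.

Lemma descent_step y p (h eps Rp Cp s : R) :
  0 < eps -> eps <= h -> 0 <= s <= 1 -> s * Rp <= eps / 2 -> s * Cp <= eps / 2 ->
  (forall a, D a -> defect a y <= h) -> N2 (p - y) <= Rp ->
  (forall a, D a -> defect a p <= Cp) ->
  (forall a, active y h eps a -> eps / 2 < ip2 (f a - y) (p - y)) ->
  forall a, D a -> defect a (y + s *: (p - y)) <= h - s * eps / 2.
Proof.
move=> eps0 epsh /andP[s0 s1] sR sC hy pR pC obtuse a Da.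
have s1' : 0 <= 1 - s by rewrite subr_ge0.
have [aa | na] := pselect (active y h eps a).
- rewrite defect_move expr2.
  have := ler_wpM2l s0 (ltW (obtuse a aa)).
  have := ler_wpM2l s0 (ler_wpM2l s0 pR); have := ler_wpM2l s0 sR.
  by have := hy a Da; lra.
- have ay : defect a y <= h - eps by rewrite leNgt; apply/negP => ?; apply: na.
  rewrite defect_conv.
  have := ler_wpM2l s1' ay; have := ler_wpM2l s0 (pC a Da).
  have := mulr_ge0 (mulr_ge0 s0 s1') (ip2P (p - y)).
  have := ler_wpM2l s0 epsh; have := ler_wpM2r (ltW eps0) s1.
  lra.
Qed.

Lemma defect_improve y (h eps R1 C1 s : R) :
  0 < eps -> 2 * eps <= h -> 0 <= s <= 1 -> s * R1 <= eps / 2 -> s * C1 <= eps / 2 ->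
  (forall a, D a -> defect a y <= h) -> (exists a, active y h eps a) ->
  (forall a, active y h eps a -> N2 (f a - y) <= R1) ->
  (forall z, N2 (z - y) <= R1 -> forall a, D a -> defect a z <= C1) ->
  exists y', forall a, D a -> defect a y' <= h - s * eps / 2.
Proof.
move=> eps0 heps s01 sR sC hy act actR ball.
have [p [pR obtuse]] := obtuse_direction eps0 heps act actR.
exists (y + s *: (p - y)); apply: descent_step sR sC hy pR (ball p pR) obtuse => //.
lra.
Qed.

Section UniformBounds.
Variables (c c' : R).
Hypothesis c_gt0 : 0 < c.
Hypothesis c'_ge0 : 0 <= c'.
Hypothesis defect_le :
  forall a y, D a -> defect a y + c * N1 (a - x) <= c' * (1 + N2 (f p0 - y)).

Lemma active_bound (Y h : R) a y : N2 (f p0 - y) <= Y -> D a ->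
  0 <= defect a y <= h -> N2 (f a - y) <= h + l * (c' * (1 + Y) / c).
Proof.
move=> hY Da /andP[d0 dh]; have l0 := l_gt0.
have hx : N1 (a - x) <= c' * (1 + Y) / c.
  have hY1 : 1 + N2 (f p0 - y) <= 1 + Y by rewrite lerD2l.
  rewrite ler_pdivlMr // mulrC; have := defect_le y Da.
  by have := ler_wpM2l c'_ge0 hY1; lra.
have := ler_wpM2l (ltW l0) hx; rewrite /defect in dh; lra.
Qed.

Lemma ball_defect_bound (Y r : R) y z : N2 (f p0 - y) <= Y -> N2 (z - y) <= r ->
  forall a, D a -> defect a z <= c' * (1 + (2 * Y + 2 * r)).
Proof.
move=> hY hz a Da; have := defect_le z Da; have := mulr_ge0 (ltW c_gt0) (ip1P (a - x)).
have : 1 + N2 (f p0 - z) <= 1 + (2 * Y + 2 * r).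
  have -> : f p0 - z = (f p0 - y) + (y - z) by rewrite addrA subrK.
  have := ip_selfD_le2 ip2C ip2L ip2P (f p0 - y) (y - z).
  by rewrite (ip_selfBC ip2C ip2L y z); lra.
by move=> /(ler_wpM2l c'_ge0); lra.
Qed.

End UniformBounds.

Lemma small_step (eps a b : R) : 0 < eps -> 0 <= a -> 0 <= b ->
  exists2 s : R, 0 < s <= 1 & s * a <= eps / 2 /\ s * b <= eps / 2.
Proof.
move=> eps0 a0 b0; pose s := eps / (2 * (a + b + eps)).
have sab : s * (a + b + eps) = eps / 2 by rewrite /s; field; lra.
have s0 : 0 < s by apply: divr_gt0; lra.
have := mulr_ge0 (ltW s0) (ltW eps0).
have := mulr_ge0 (ltW s0) a0; have := mulr_ge0 (ltW s0) b0.
move=> sb sa se; exists s; last by split; lra.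
by rewrite s0 /= -(ler_pM2r eps0) mul1r; lra.
Qed.

Definition defect_levels := [set h : R | exists y, forall a, D a -> defect a y <= h].

Lemma has_inf_defect_levels : has_inf defect_levels.
Proof.
have [c [c' [c0 _ hco]]] := defect_coercive; split.
- exists (c' * (1 + N2 (f p0 - f p0))), (f p0) => a Da.
  by have := hco a (f p0) Da; have := mulr_ge0 (ltW c0) (ip1P (a - x)); lra.
- exists (- (l * N1 (p0 - x))) => h [y hy]; apply: le_trans (hy p0 Dp0).
  by rewrite /defect; have := ip2P (f p0 - y); lra.
Qed.

Lemma defect_inf (sig : R) : 0 < sig -> exists y, forall a, D a -> defect a y <= sig.
Proof.
move=> sig0; have l0 := l_gt0.
have [c [c' [c0 c'0 hco]]] := defect_coercive.
have Sinf := has_inf_defect_levels; have Slb := ge_inf (proj2 Sinf).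
have [m_le0 | m_gt0] := leP (inf defect_levels) 0.
  have [h [y hy] hlt] := inf_adherent sig0 Sinf.
  by exists y => a Da; apply: le_trans (hy a Da) _; lra.
exfalso; pose eps := inf defect_levels / 2.
have eps0 : 0 < eps by rewrite /eps; lra.
have m2 : inf defect_levels = 2 * eps by rewrite /eps; field.
pose Y := 3 * eps + l * N1 (p0 - x).
pose R1 := 3 * eps + l * (c' * (1 + Y) / c).
pose C1 := c' * (1 + (2 * Y + 2 * R1)).
have Y0 : 0 <= Y by have := mulr_ge0 (ltW l0) (ip1P (p0 - x)); rewrite /Y; lra.
have R10 : 0 <= R1.
  apply: addr_ge0; first lra.
  by apply: mulr_ge0 (ltW l0) (divr_ge0 (mulr_ge0 c'0 _) (ltW c0)); lra.
have C10 : 0 <= C1 by rewrite /C1 mulr_ge0 //; lra.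
have [s /andP[s0 s1] [sR sC]] := small_step eps0 R10 C10.
have s01 : 0 <= s <= 1 by rewrite s1 ltW.
have seps := ler_wpM2r (ltW eps0) s1.
have kap0 : 0 < s * eps / 2 by apply: divr_gt0 (mulr_gt0 s0 eps0) _.
have [h [y hy] hlt] := inf_adherent kap0 Sinf.
have hm : inf defect_levels <= h by apply: Slb; exists y.
have h3 : h <= 3 * eps by lra.
have hY : N2 (f p0 - y) <= Y by have := hy p0 Dp0; rewrite /defect /Y; lra.
have act : exists a, active y h eps a.
  apply: contrapT => none; have /Slb : defect_levels (h - eps).
    by exists y => a Da; rewrite leNgt; apply/negP => ?; apply: none; exists a.
  lra.
have actR a : active y h eps a -> N2 (f a - y) <= R1.
  case=> Da ha; have d0 : 0 <= defect a y <= h by rewrite (hy a Da) andbT; lra.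
  by have := active_bound c0 c'0 hco hY Da d0; rewrite /R1; lra.
have ball z : N2 (z - y) <= R1 -> forall a, D a -> defect a z <= C1.
  by move=> hz; exact: (ball_defect_bound c0 c'0 hco hY hz).
have heps : 2 * eps <= h by lra.
have [y' hy'] := defect_improve eps0 heps s01 sR sC hy act actR ball.
have /Slb : defect_levels (h - s * eps / 2) by exists y'.
lra.
Qed.

Lemma defect_gap (L rho : R) : l < L -> 0 < rho ->
  (forall a, D a -> rho <= N1 (a - x)) ->
  exists y (d : R), 0 < d /\ forall a, D a -> N2 (f a - y) + d <= L * N1 (a - x).
Proof.
move=> lL rho0 far.
have d0 : 0 < (L - l) * rho / 2 by apply: divr_gt0 => //; apply: mulr_gt0; lra.
have [y hy] := defect_inf d0; exists y, ((L - l) * rho / 2); split=> // a Da.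
have Ll : 0 <= L - l by rewrite subr_ge0 ltW.
by have := hy a Da; have := ler_wpM2l Ll (far a Da); rewrite /defect; lra.
Qed.

End OnePointExtension.

Section QRepresentation.
Variables (R : realType) (V1 V2 : lmodType R).
Variables (ip1 : V1 -> V1 -> R) (ip2 : V2 -> V2 -> R) (K : R).
Hypothesis ip1C : forall x y, ip1 x y = ip1 y x.
Hypothesis ip1L : forall (a : R) x y z, ip1 (a *: x + y) z = a * ip1 x z + ip1 y z.
Hypothesis ip2C : forall x y, ip2 x y = ip2 y x.
Hypothesis ip2L : forall (a : R) x y z, ip2 (a *: x + y) z = a * ip2 x z + ip2 y z.

Local Notation bf := (bform ip1 ip2 K).
Local Notation qf := (qform ip1 ip2 K).

Lemma qform_bsub b e : qf (bsub b e) = qf b - bf b e + qf e.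
Proof.
by rewrite /qform /bform /bsub /= (ip_selfB ip1C ip1L) (ip_selfB ip2C ip2L); field.
Qed.

Lemma qform_bsubxx b : qf (bsub b b) = 0.
Proof. by rewrite /qform /bform /bsub /= !subrr (ip0l ip1L) (ip0l ip2L) mulr0 subrr mul0r. Qed.

Definition qaffine e (gam : R) b := bf b e - qf e + gam / 2.

Definition qadmissible (A : set (V1 * V2)) e (gam : R) :=
  forall a, A a -> gam / 2 <= qf (bsub a e).

Definition qsup A b : \bar R :=
  ereal_sup [set z | exists e gam, qadmissible A e gam /\ z = (qaffine e gam b)%:E].

Lemma qaffine_sub_qform e gam b : qaffine e gam b - qf b = gam / 2 - qf (bsub b e).
Proof. by rewrite qform_bsub /qaffine; ring. Qed.

Lemma qaffine_bsub e gam b b' : qaffine e gam b' = qaffine e gam b + bf (bsub b' b) e.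
Proof. by rewrite /qaffine /bform /bsub /= (ipBl ip1L) (ipBl ip2L); ring. Qed.

Lemma qaffine_bcomb e gam t b c :
  qaffine e gam (bcomb t b c) = t * qaffine e gam b + (1 - t) * qaffine e gam c.
Proof.
by rewrite /qaffine /bform /bcomb /= !(ipDl ip1L) !(ipZl ip1L) !(ipDl ip2L) !(ipZl ip2L); ring.
Qed.

Lemma qsup_ge A e gam b : qadmissible A e gam -> ((qaffine e gam b)%:E <= qsup A b)%E.
Proof. by move=> adm; apply: ereal_sup_ubound; exists e, gam. Qed.

Lemma qsup_le_on A a : A a -> (qsup A a <= (qf a)%:E)%E.
Proof.
move=> Aa; apply: ge_ereal_sup => _ [e [gam [adm ->]]]; rewrite lee_fin.
by have := qaffine_sub_qform e gam a; have := adm a Aa; lra.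
Qed.

Lemma qsup_wlsc A : wlsc ip1 ip2 K (qsup A).
Proof.
move=> t b /= /negP; rewrite -ltNge => /ereal_sup_gt[_ [e [gam [adm ->]]]].
rewrite lte_fin => tlt; exists [:: e], (qaffine e gam b - t); split; first by rewrite subr_gt0.
move=> b' near; apply/negP; rewrite -ltNge; apply: lt_le_trans (qsup_ge b' adm).
rewrite lte_fin (qaffine_bsub e gam b); have := near e (mem_head _ _).
by rewrite ltr_norml => /andP[+ _]; lra.
Qed.

Lemma qsup_convex A : convex_fun (qsup A).
Proof.
move=> t b c /andP[t0 t1]; apply: ge_ereal_sup => _ [e [gam [adm ->]]].
rewrite qaffine_bcomb EFinD !EFinM.
by apply: leeD; apply: lee_wpmul2l; rewrite ?lee_fin ?qsup_ge //; lra.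
Qed.

Lemma q_representable_sep A : q_positive ip1 ip2 K A ->
  (forall b, ~ A b -> exists e gam, qadmissible A e gam /\ qf (bsub b e) < gam / 2) ->
  q_representable ip1 ip2 K A.
Proof.
move=> qpos sep.
have onA a : A a -> qsup A a = (qf a)%:E.
  move=> Aa; apply/le_anti; rewrite qsup_le_on //=.
  have adm : qadmissible A a 0 by move=> c Ac; rewrite mul0r; exact: qpos.2.
  apply: le_trans (qsup_ge a adm); rewrite lee_fin.
  by have := qaffine_sub_qform a 0 a; rewrite qform_bsubxx; lra.
have offA b : ~ A b -> ((qf b)%:E < qsup A b)%E.
  move=> nAb; have [e [gam [adm lt]]] := sep b nAb.
  apply: lt_le_trans (qsup_ge b adm); rewrite lte_fin.
  by have := qaffine_sub_qform e gam b; lra.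
have ge b : ((qf b)%:E <= qsup A b)%E.
  by have [/onA -> // | /offA /ltW] := pselect (A b).
split=> //; exists (qsup A); split.
- exact: qsup_wlsc.
- split; last by have [a Aa] := qpos.1; exists a; rewrite onA.
  by move=> b; apply: contraTneq (ge b) => ->; rewrite leNgt ltNye.
- exact: qsup_convex.
- exact: ge.
- apply/seteqP; split=> b /=; last exact: onA.
  by move=> eqb; apply: contrapT => /offA; rewrite eqb ltxx.
Qed.

End QRepresentation.

Section Graph.
Variables (R : realType) (V1 V2 : lmodType R).
Variables (ip1 : V1 -> V1 -> R) (ip2 : V2 -> V2 -> R).
Hypothesis ip1C : forall x y, ip1 x y = ip1 y x.
Hypothesis ip1L : forall (a : R) x y z, ip1 (a *: x + y) z = a * ip1 x z + ip1 y z.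
Hypothesis ip1P : forall x, 0 <= ip1 x x.
Hypothesis ip2C : forall x y, ip2 x y = ip2 y x.
Hypothesis ip2L : forall (a : R) x y z, ip2 (a *: x + y) z = a * ip2 x z + ip2 y z.
Hypothesis ip2P : forall x, 0 <= ip2 x x.
Hypothesis ip2D : forall x, ip2 x x = 0 -> x = 0.

Local Notation N1 u := (ip1 u u).
Local Notation N2 u := (ip2 u u).

Lemma lipschitz_on_sqr (L : R) (D : set V1) (f : V1 -> V2) :
  0 <= L -> lipschitz_on ip1 ip2 L D f ->
  forall a b, D a -> D b -> N2 (f a - f b) <= L ^+ 2 * N1 (a - b).
Proof.
move=> L0 lip a b Da Db; have := lip a b Da Db; rewrite /ipnorm => h.
rewrite -(sqr_sqrtr (ip2P _)) -(sqr_sqrtr (ip1P _)) -exprMn ler_sqr ?nnegrE ?sqrtr_ge0 //.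
exact: mulr_ge0 L0 (sqrtr_ge0 _).
Qed.

Lemma hclosed_far (D : set V1) x : hclosed ip1 D -> ~ D x ->
  exists rho, 0 < rho /\ forall a, D a -> rho <= N1 (a - x).
Proof.
move=> Dc nDx; have [r [r0 hr]] := Dc x nDx; exists (r ^+ 2); split; first exact: exprn_gt0.
move=> a Da; have : ~ ipnorm ip1 (a - x) < r by move=> /hr.
move=> /negP; rewrite -leNgt /ipnorm => h.
by rewrite -(sqr_sqrtr (ip1P (a - x))) ler_sqr ?nnegrE ?sqrtr_ge0 // ltW.
Qed.

Variables (K K' : R) (D : set V1) (f : V1 -> V2).
Hypothesis K'_gt0 : 0 < K'.
Hypothesis lt_K'K : K' < K.
Hypothesis f_lip : forall a b, D a -> D b -> N2 (f a - f b) <= K' ^+ 2 * N1 (a - b).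

Local Notation qf := (qform ip1 ip2 K).

Lemma lt_sqr_K'K : K' ^+ 2 < K ^+ 2.
Proof. by rewrite ltr_pXn2r // ?nnegrE ltW // (lt_trans K'_gt0). Qed.

Lemma graph_q_positive : D !=set0 -> q_positive ip1 ip2 K (fgraph_on D f).
Proof.
move=> [p Dp]; split; first by exists (p, f p).
move=> b c [Db eb] [Dc ec]; rewrite /qform /bform /bsub /= eb ec.
have := f_lip Db Dc; have := ler_wpM2r (ip1P (b.1 - c.1)) (ltW lt_sqr_K'K).
by move=> *; apply: divr_ge0; lra.
Qed.

Lemma qform_bsub_vertical b y : qf (bsub b (b.1, y)) = - N2 (b.2 - y) / 2.
Proof. by rewrite /qform /bform /bsub /= subrr (ip0l ip1L) mulr0 sub0r. Qed.

Lemma graph_admissible x y (d : R) :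
  (forall a, D a -> N2 (f a - y) + d <= K ^+ 2 * N1 (a - x)) ->
  qadmissible ip1 ip2 K (fgraph_on D f) (x, y) d.
Proof.
move=> bound a [Da ea]; rewrite /qform /bform /bsub /= ea.
by have := bound _ Da; lra.
Qed.

Lemma graph_separation b : D !=set0 -> hclosed ip1 D -> ~ fgraph_on D f b ->
  exists e gam, qadmissible ip1 ip2 K (fgraph_on D f) e gam /\ qf (bsub b e) < gam / 2.
Proof.
move=> [p0 Dp0] Dc nAb; have [Db | nDb] := pselect (D b.1).
- exists (b.1, f b.1), 0; split.
    apply: graph_admissible => a Da; rewrite addr0.
    exact: le_trans (f_lip Da Db) (ler_wpM2r (ip1P _) (ltW lt_sqr_K'K)).
  have : 0 < N2 (b.2 - f b.1).
    rewrite lt_def ip2P andbT; apply/eqP => /ip2D /subr0_eq eb.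
    exact: nAb (conj Db eb).
  by rewrite qform_bsub_vertical; lra.
- have [rho [rho0 far]] := hclosed_far Dc nDb.
  have K'2 := lt_sqr_K'K.
  have [y [d [d0 bound]]] := defect_gap ip1C ip1L ip1P ip2C ip2L ip2P
    (sqr_ge0 K') (midf_lt K'2).1 f_lip Dp0 (midf_lt K'2).2 rho0 far.
  exists (b.1, y), d; split; first exact: graph_admissible.
  by rewrite qform_bsub_vertical; have := ip2P (b.2 - y); lra.
Qed.

End Graph.

Theorem mainTheorem18 (R : realType) (V1 V2 : lmodType R)
  (ip1 : V1 -> V1 -> R) (ip2 : V2 -> V2 -> R)
  (H1 : is_hilbert ip1) (H2 : is_hilbert ip2)
  (K K' : R) (hK : 0 < K) (hK' : 0 < K') (hKK : K' < K)
  (D : set V1) (f : V1 -> V2)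
  (hD0 : D !=set0) (hDc : hclosed ip1 D) (hf : lipschitz_on ip1 ip2 K' D f) :
  q_representable ip1 ip2 K (fgraph_on D f).
Proof.
case: H1 => ip1C ip1L ip1P _ _; case: H2 => ip2C ip2L ip2P ip2D _.
have lip a b : D a -> D b -> ip2 (f a - f b) (f a - f b) <= K' ^+ 2 * ip1 (a - b) (a - b).
  by move=> Da Db; have := lipschitz_on_sqr ip1P ip2P (ltW hK') hf Da Db.
apply: (q_representable_sep ip1C ip1L ip2C ip2L).
- exact: (graph_q_positive ip1P hK' hKK lip hD0).
- move=> b; exact: (graph_separation ip1C ip1L ip1P ip2C ip2L ip2P ip2D hK' hKK lip hD0 hDc).
Qed.
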